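(* Let $p\ge 1$, let $\alpha\in[0,1)$ and let $g\in\mathbb{R}^p$ with $g\neq 0$. Let $m$ be an index with $|g_m|=\max_d|g_d|$, and let $I_{12}$ be the $p\times p$ diagonal matrix with $(I_{12})_{dd}=1$ if $|g_d|\ge \alpha|g_m|$ and $(I_{12})_{dd}=0$ otherwise (all off-diagonal entries zero). Define $$\Delta x_{12}:=-I_{12}g\left(\frac{\alpha}{\|I_{12}g\|_1}+\frac{1-\alpha}{\|I_{12}g\|_2}\right),\qquad q_1:=\left(\frac{\|I_{12}g\|_1}{\|I_{12}g\|_2}\right)^2,$$ $$c_\alpha(q_1):=\frac{\sqrt{q_1(\alpha^2q_1+4(1-\alpha))}-\alpha q_1}{2(1-\alpha)(\sqrt{q_1}(1-\alpha)+\alpha)}.$$ If $\Delta x_{12,c}:=c_\alpha(q_1)\cdot\Delta x_{12}$, then $h_\alpha(\Delta x_{12,c})=1$, where $h_\alpha(v):=\alpha\|v\|_1+(1-\alpha)\|v\|_2^2$ for $v\in\mathbb{R}^p$.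
   Context: $g$ plays the role of a gradient vector; $I_{12}$ selects the coordinates whose absolute gradient is at least $\alpha$ times the maximal absolute gradient; $\Delta x_{12}$ is the (non-scaled) elastic gradient descent update direction. *)

(* R : rcfType (real closed field, so that Num.sqrt exists). *)
From mathcomp Require Import all_boot all_order all_algebra.
Set Implicit Arguments. Unset Strict Implicit. Unset Printing Implicit Defensive.
Import Order.TTheory GRing.Theory Num.Theory.
Local Open Scope ring_scope.

Definition norm1 {R : rcfType} {p : nat} (v : 'cV[R]_p) : R :=
  \sum_(i < p) `|v i 0|.

Definition norm2sq {R : rcfType} {p : nat} (v : 'cV[R]_p) : R :=
  \sum_(i < p) (v i 0) ^+ 2.

Definition norm2 {R : rcfType} {p : nat} (v : 'cV[R]_p) : R :=
  Num.sqrt (norm2sq v).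

Definition I12 {R : rcfType} {p : nat} (alpha : R) (g : 'cV[R]_p) (m : 'I_p)
  : 'M[R]_p :=
  \matrix_(i < p, j < p)
    (if i == j then (if alpha * `|g m 0| <= `|g i 0| then 1 else 0) else 0).

Definition dx12 {R : rcfType} {p : nat} (alpha : R) (g : 'cV[R]_p) (m : 'I_p)
  : 'cV[R]_p :=
  let Ig := I12 alpha g m *m g in
  - (alpha / norm1 Ig + (1 - alpha) / norm2 Ig) *: Ig.

Definition q1 {R : rcfType} {p : nat} (alpha : R) (g : 'cV[R]_p) (m : 'I_p) : R :=
  let Ig := I12 alpha g m *m g in (norm1 Ig / norm2 Ig) ^+ 2.

Definition c_alpha {R : rcfType} (alpha q : R) : R :=
  (Num.sqrt (q * (alpha ^+ 2 * q + 4 * (1 - alpha))) - alpha * q)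
  / (2 * (1 - alpha) * (Num.sqrt q * (1 - alpha) + alpha)).

Definition h_alpha {R : rcfType} {p : nat} (alpha : R) (v : 'cV[R]_p) : R :=
  alpha * norm1 v + (1 - alpha) * norm2sq v.

(** The selected gradient [v := I12 g] is nonzero because it keeps the
    maximal entry [g_m] (as [alpha <= 1]), so [n1 := |v|_1] and
    [n2 := |v|_2] are positive.  Along the ray [t * v], [h_alpha] only depends
    on [T := |t| n1] and the ratio [s := n1 / n2 = sqrt q1]:
    [h_alpha (t v) = alpha T + (1 - alpha) (T / s)^2].  The factor [c_alpha]
    is chosen so that the step [c_alpha(q1) * Delta x_12] realises the
    positive root [T] of this quadratic equated to [1]. *)

From mathcomp Require Import all_boot all_order all_algebra.
From mathcomp Require Import ring.

Set Implicit Arguments.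
Unset Strict Implicit.
Unset Printing Implicit Defensive.

Import Order.TTheory GRing.Theory Num.Theory.
Local Open Scope ring_scope.

Section Norms.

Variables (R : rcfType) (p : nat).
Implicit Types (v : 'cV[R]_p) (k : R).

Lemma norm1Z k v : norm1 (k *: v) = `|k| * norm1 v.
Proof. by rewrite /norm1 mulr_sumr; apply: eq_bigr => i _; rewrite mxE normrM. Qed.

Lemma norm2sqZ k v : norm2sq (k *: v) = k ^+ 2 * norm2sq v.
Proof. by rewrite /norm2sq mulr_sumr; apply: eq_bigr => i _; rewrite mxE exprMn. Qed.

Lemma h_alphaZ (a : R) k v :
  h_alpha a (k *: v) = a * (`|k| * norm1 v) + (1 - a) * (k ^+ 2 * norm2sq v).
Proof. by rewrite /h_alpha norm1Z norm2sqZ. Qed.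

Lemma col_neq0P v : reflect (exists i, v i 0 != 0) (v != 0).
Proof.
apply: (iffP idP) => [|[i]]; last by apply: contraNneq => ->; rewrite mxE.
move=> v_neq0; have [i vi0 | v0] := pickP (fun i => v i 0 != 0); first by exists i.
case/eqP: v_neq0; apply/matrixP => i j; rewrite ord1 mxE; exact/eqP/negbFE/v0.
Qed.

Lemma norm1_gt0 v : v != 0 -> 0 < norm1 v.
Proof.
case/col_neq0P => i vi0; rewrite /norm1 (bigD1 i) //=.
by rewrite ltr_wpDr ?normr_gt0 // sumr_ge0.
Qed.

Lemma norm2sq_gt0 v : v != 0 -> 0 < norm2sq v.
Proof.
case/col_neq0P => i vi0; rewrite /norm2sq (bigD1 i) //=.
by rewrite ltr_wpDr ?exprn_even_gt0 // sumr_ge0 // => j _; rewrite sqr_ge0.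
Qed.

Lemma norm2_gt0 v : v != 0 -> 0 < norm2 v.
Proof. by move=> /norm2sq_gt0; rewrite sqrtr_gt0. Qed.

Lemma norm2sqE v : norm2sq v = norm2 v ^+ 2.
Proof.
by rewrite /norm2 sqr_sqrtr // sumr_ge0 // => i _; rewrite sqr_ge0.
Qed.

End Norms.

Lemma I12_mulE (R : rcfType) (p : nat) (a : R) (g : 'cV[R]_p) (m i : 'I_p) :
  (I12 a g m *m g) i 0 = if a * `|g m 0| <= `|g i 0| then g i 0 else 0.
Proof.
rewrite mxE (bigD1 i) //= big1 ?addr0 => [|j /negbTE ji]; last first.
  by rewrite mxE eq_sym ji mul0r.
by rewrite mxE eqxx; case: ifP; rewrite ?mul1r ?mul0r.
Qed.

Lemma I12_mul_neq0 (R : rcfType) (p : nat) (a : R) (g : 'cV[R]_p) (m : 'I_p) :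
  a <= 1 -> g != 0 -> (forall d, `|g d 0| <= `|g m 0|) -> I12 a g m *m g != 0.
Proof.
move=> a_le1 /col_neq0P[i gi0] gm_max; apply/col_neq0P; exists m.
have gm0 : g m 0 != 0.
  by rewrite -normr_gt0 (lt_le_trans _ (gm_max i)) ?normr_gt0.
by rewrite I12_mulE ler_piMl ?normr_ge0.
Qed.

Section ElasticRoot.

Variables (R : rcfType) (a s : R).
Hypotheses (a_ge0 : 0 <= a) (a_lt1 : a < 1) (s_gt0 : 0 < s).

Definition h_root : R :=
  s * (Num.sqrt (a ^+ 2 * s ^+ 2 + 4 * (1 - a)) - a * s) / (2 * (1 - a)).

Let a1_gt0 : 0 < 1 - a. Proof. by rewrite subr_gt0. Qed.

Let disc_ge0 : 0 <= a ^+ 2 * s ^+ 2 + 4 * (1 - a).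
Proof. by rewrite addr_ge0 ?mulr_ge0 ?sqr_ge0 ?(ltW s_gt0) ?(ltW a1_gt0). Qed.

Lemma h_root_ge0 : 0 <= h_root.
Proof.
have as_ge0 : 0 <= a * s by rewrite mulr_ge0 // ltW.
rewrite /h_root divr_ge0 ?pmulr_rge0 ?(ltW a1_gt0) //.
rewrite subr_ge0 -ler_sqr ?nnegrE ?sqrtr_ge0 // sqr_sqrtr // exprMn lerDl.
by rewrite mulr_ge0 // ltW.
Qed.

Lemma h_root_eq1 : a * h_root + (1 - a) * (h_root / s) ^+ 2 = 1.
Proof.
rewrite /h_root; set E := Num.sqrt _.
have E2 : E ^+ 2 = a ^+ 2 * s ^+ 2 + 4 * (1 - a) by rewrite sqr_sqrtr.
have [a1_neq0 s_neq0] : 1 - a != 0 /\ s != 0 by rewrite !gt_eqF.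
transitivity ((E ^+ 2 - a ^+ 2 * s ^+ 2) / (4 * (1 - a))).
  by field; rewrite a1_neq0 s_neq0.
by rewrite E2; field.
Qed.

Lemma c_alpha_sqrE : c_alpha a (s ^+ 2) * (s * (1 - a) + a) = h_root.
Proof.
have den_gt0 : 0 < s * (1 - a) + a by rewrite ltr_wpDr // mulr_gt0.
rewrite /c_alpha /h_root sqrtr_sqr gtr0_norm // sqrtrM ?sqr_ge0 //.
by rewrite sqrtr_sqr gtr0_norm //; field; rewrite !gt_eqF.
Qed.

End ElasticRoot.

Lemma h_alpha_elastic_step (R : rcfType) (p : nat) (a : R) (v : 'cV[R]_p) :
  0 <= a -> a < 1 -> v != 0 ->
  let n1 := norm1 v in let n2 := norm2 v in
  h_alpha a (c_alpha a ((n1 / n2) ^+ 2) *: (- (a / n1 + (1 - a) / n2) *: v)) = 1.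
Proof.
move=> a_ge0 a_lt1 v_neq0 n1 n2.
have n1_gt0 : 0 < n1 by apply: norm1_gt0.
have n2_gt0 : 0 < n2 by apply: norm2_gt0.
set s := n1 / n2; have s_gt0 : 0 < s by rewrite divr_gt0.
set t := c_alpha a (s ^+ 2) * (a / n1 + (1 - a) / n2).
have tn1E : t * n1 = h_root a s.
  rewrite -(c_alpha_sqrE a_ge0 a_lt1 s_gt0) -mulrA; congr (_ * _).
  by rewrite /s; field; rewrite !gt_eqF.
have t_ge0 : 0 <= t.
  by rewrite -(pmulr_lge0 _ n1_gt0) tn1E h_root_ge0.
rewrite scalerA mulrN h_alphaZ normrN sqrrN ger0_norm // norm2sqE -/n2.
have -> : t ^+ 2 * n2 ^+ 2 = (t * n1 / s) ^+ 2.
  by rewrite /s; field; rewrite !gt_eqF.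
by rewrite tn1E h_root_eq1.
Qed.

Theorem theorem1 (R : rcfType) (p : nat) (hp : (1 <= p)%N)
  (alpha : R) (ha0 : 0 <= alpha) (ha1 : alpha < 1)
  (g : 'cV[R]_p) (hg : g != 0)
  (m : 'I_p) (hm : forall d : 'I_p, `|g d 0| <= `|g m 0|) :
  h_alpha alpha (c_alpha alpha (q1 alpha g m) *: dx12 alpha g m) = 1.
Proof.
rewrite /q1 /dx12; apply: h_alpha_elastic_step => //.
by apply: I12_mul_neq0 => //; apply: ltW.
Qed.
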